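(* Let $\mathcal F_d$ be a set of OPFs on $\mathbb C^d$ containing the unit OPF ${\bf u}$ and satisfying C1 and the Finiteness Principle, and let $\bar\Gamma^d$ be the associated representation of $\mathrm{SU}(d)$ on the real span $V_d$ of $\mathcal F_d$. Then $\bar\Gamma^d$ contains a unique trivial subrepresentation (the trivial representation occurs exactly once, spanned by ${\bf u}$).
   Context: An OPF on $\mathbb C^d$ is a function from rays of $\mathbb C^d$ to $[0,1]$; the unit OPF is ${\bf u}(\psi)=1$ for all $\psi$. (C1): for $F\in\mathcal F_d$, $U\in\mathrm{SU}(d)$, the function $F\circ U:\psi\mapsto F(U\psi)$ lies in $\mathcal F_d$. Finiteness: $V_d$, the real span of $\mathcal F_d$, is finite-dimensional. The associated representation $\bar\Gamma^d$ is defined on $V_d$ by $\bar\Gamma^d(U)F=F\circ U$, i.e. for a basis $F_i$, $F_i(U\psi)=\sum_j\bar\Gamma_i^{\,j}(U)F_j(\psi)$. *)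

From HB Require Import structures.
From mathcomp Require Import all_boot all_order all_algebra.
From mathcomp Require Import complex.
Set Implicit Arguments. Unset Strict Implicit. Unset Printing Implicit Defensive.
Import Order.TTheory GRing.Theory Num.Theory.
Local Open Scope ring_scope.

Section OPF.
Variables (R : rcfType) (d : nat).
Local Notation C := (R[i]).

Definition adjmx m n (A : 'M[C]_(m, n)) : 'M[C]_(n, m) := (map_mx Num.conj A)^T.

Definition unitvec (psi : 'cV[C]_d) : bool := adjmx psi *m psi == 1%:M.

(* Points of C^d of norm one; a ray is such a point up to a phase.  A function
   on rays is a phase-invariant function on unit vectors (see [ray_fun]). *)
Definition uvec := {psi : 'cV[C]_d | unitvec psi}.

Definition ray_fun (F : uvec -> R) : Prop :=
  forall psi phi : uvec,
    (exists c : C, c * Num.conj c = 1 /\ val phi = c *: val psi) -> F phi = F psi.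

Definition OPF (F : uvec -> R) : Prop :=
  ray_fun F /\ forall psi, 0 <= F psi <= 1.

Definition unitOPF : uvec -> R := fun _ => 1.

Definition SU : pred 'M[C]_d :=
  fun U => (U *m adjmx U == 1%:M) && (\det U == 1).

(* action of a matrix on unit vectors (only used for U in SU(d), where
   U psi is again a unit vector) *)
Definition act (U : 'M[C]_d) (psi : uvec) : uvec :=
  odflt psi (insub (U *m val psi)).

Definition compU (F : uvec -> R) (U : 'M[C]_d) : uvec -> R :=
  fun psi => F (act U psi).

Definition rspan (S : (uvec -> R) -> Prop) (G : uvec -> R) : Prop :=
  exists n (a : 'I_n -> R) (f : 'I_n -> uvec -> R),
    (forall i, S (f i)) /\ forall psi, G psi = \sum_(i < n) a i * f i psi.

Definition C1 (S : (uvec -> R) -> Prop) : Prop :=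
  forall F U, S F -> U \in SU -> S (compU F U).

Definition finite_dim_span (S : (uvec -> R) -> Prop) : Prop :=
  exists n (b : 'I_n -> uvec -> R),
    (forall i, rspan S (b i)) /\
    forall G, rspan S G -> exists a : 'I_n -> R,
      forall psi, G psi = \sum_(i < n) a i * b i psi.

Definition Gamma (U : 'M[C]_d) (F : uvec -> R) : uvec -> R := compU F U.

Definition fixed_vec (S : (uvec -> R) -> Prop) (G : uvec -> R) : Prop :=
  rspan S G /\ forall U, U \in SU -> forall psi, Gamma U G psi = G psi.

End OPF.

From HB Require Import structures.
From mathcomp Require Import all_boot all_order all_algebra.
From mathcomp Require Import complex.
From mathcomp Require Import ring.
Set Implicit Arguments. Unset Strict Implicit. Unset Printing Implicit Defensive.

Import Order.TTheory GRing.Theory Num.Theory.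
Local Open Scope ring_scope.

(* SU(d) acts transitively on rays: given unit vectors psi and phi, pick a
   phase c making <c phi, psi> real; the Householder reflection along
   psi - c phi is then unitary and maps psi to c phi, and multiplying it by a
   d-th root of its conjugate determinant lands in SU(d).  Hence a
   SU(d)-invariant function on rays is constant, and the constants are the
   multiples of u. *)

Section Hermitian.
Context {R : rcfType}.
Local Notation C := (R[i]).

Lemma adjmxM m n p (A : 'M[C]_(m, n)) (B : 'M[C]_(n, p)) :
  adjmx (A *m B) = adjmx B *m adjmx A.
Proof. by rewrite /adjmx map_mxM trmx_mul. Qed.

Lemma adjmxB m n (A B : 'M[C]_(m, n)) : adjmx (A - B) = adjmx A - adjmx B.
Proof. by rewrite /adjmx map_mxB linearB. Qed.

Lemma adjmxZ m n a (A : 'M[C]_(m, n)) : adjmx (a *: A) = a^* *: adjmx A.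
Proof. by rewrite /adjmx map_mxZ linearZ. Qed.

Lemma adjmx1 n : adjmx (1%:M : 'M[C]_n) = 1%:M.
Proof. by rewrite /adjmx map_mx1 trmx1. Qed.

Lemma adjmxK m n (A : 'M[C]_(m, n)) : adjmx (adjmx A) = A.
Proof. by apply/matrixP => i j; rewrite /adjmx !mxE conjCK. Qed.

Lemma det_adjmx n (A : 'M[C]_n) : \det (adjmx A) = (\det A)^*.
Proof. by rewrite /adjmx det_tr det_map_mx. Qed.

Definition hdot n (x y : 'cV[C]_n) : C := (adjmx x *m y) 0 0.

Lemma hdotE n (x y : 'cV[C]_n) : adjmx x *m y = (hdot x y)%:M.
Proof. exact: mx11_scalar. Qed.

Lemma conj_hdot n (x y : 'cV[C]_n) : (hdot x y)^* = hdot y x.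
Proof.
rewrite /hdot !mxE rmorph_sum; apply: eq_bigr => i _.
by rewrite /adjmx !mxE rmorphM /= conjCK mulrC.
Qed.

Lemma hdot_eq0 n (x : 'cV[C]_n) : hdot x x = 0 -> x = 0.
Proof.
have sq_ge0 k : true -> 0 <= (adjmx x) 0 k * x k 0.
  by move=> _; rewrite /adjmx !mxE mulrC -normCK exprn_ge0.
rewrite /hdot mxE => /(psumr_eq0P sq_ge0) x0.
apply/matrixP => i j; rewrite ord1 mxE.
move: (x0 i isT); rewrite /adjmx !mxE mulrC -normCK => /eqP.
by rewrite expf_eq0 /= normr_eq0 => /eqP.
Qed.

Lemma hdotBl n (x y z : 'cV[C]_n) : hdot (x - y) z = hdot x z - hdot y z.
Proof. by rewrite /hdot adjmxB mulmxBl !mxE. Qed.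

Lemma hdotBr n (x y z : 'cV[C]_n) : hdot x (y - z) = hdot x y - hdot x z.
Proof. by rewrite /hdot mulmxBr !mxE. Qed.

Lemma hdotZl n k (x z : 'cV[C]_n) : hdot (k *: x) z = k^* * hdot x z.
Proof. by rewrite /hdot adjmxZ -scalemxAl mxE. Qed.

Lemma hdotZr n k (x z : 'cV[C]_n) : hdot x (k *: z) = k * hdot x z.
Proof. by rewrite /hdot -scalemxAr mxE. Qed.

Definition unitarymx {n} : pred 'M[C]_n := fun H => H *m adjmx H == 1%:M.

(* For [v = 0] the coefficient [2 / hdot v v] is [2 / 0 = 0], so the
   reflection degenerates to the identity. *)
Definition householder n (v : 'cV[C]_n) : 'M[C]_n :=
  1%:M - (2 / hdot v v) *: (v *m adjmx v).

Lemma householder_unitary n (v : 'cV[C]_n) : householder v \in unitarymx.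
Proof.
set q := hdot v v; set k := 2 / q; set P := v *m adjmx v.
have PP : P *m P = q *: P.
  by rewrite /P -mulmxA (mulmxA (adjmx v)) hdotE mul_scalar_mx -scalemxAr.
have real_k : k^* = k by rewrite /k rmorphM /= fmorphV /= conj_hdot conjC_nat.
have kkq : k * k * q = k + k.
  rewrite /k; have [->|q0] := eqVneq q 0; first by rewrite invr0 !mulr0 addr0.
  by field.
apply/eqP; rewrite /householder adjmxB adjmx1 adjmxZ real_k adjmxM adjmxK -/P.
rewrite mulmxBl !mul1mx mulmxBr mulmx1 -scalemxAl -scalemxAr PP !scalerA kkq.
by rewrite -/k scalerDl opprB addrK subrK.
Qed.

Lemma householder_swap n (x y : 'cV[C]_n) :
  hdot x x = hdot y y -> hdot x y = hdot y x -> householder (x - y) *m x = y.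
Proof.
move=> xx xy; set v := x - y.
have vv : hdot v v = 2 * hdot v x.
  rewrite !(hdotBl, hdotBr) xx xy; ring.
rewrite /householder mulmxBl mul1mx -scalemxAl -mulmxA hdotE mul_mx_scalar.
rewrite scalerA.
have [/hdot_eq0 v0|vn0] := eqVneq (hdot v v) 0.
  by rewrite v0 scaler0 subr0; apply/eqP; rewrite -subr_eq0 -/v v0.
have vx0 : hdot v x != 0.
  by apply: contraNneq vn0; rewrite vv => ->; rewrite mulr0.
have -> : 2 / hdot v v * hdot v x = 1.
  by rewrite vv invfM mulrA divff ?pnatr_eq0 // mul1r mulVf.
by rewrite scale1r opprB addrC subrK.
Qed.

Lemma phase_normC (a : C) : exists2 c : C, c * c^* = 1 & c^* * a = `|a|.
Proof.
have [->|a0] := eqVneq a 0.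
  by exists 1; rewrite ?rmorph1 ?mulr1 ?mulr0 ?normr0.
have na0 : `|a| != 0 by rewrite normr_eq0.
exists (a / `|a|).
  by rewrite rmorphM /= fmorphV /= conj_normC mulrACA -normCK -expr2 -exprMn
    divff // expr1n.
by rewrite rmorphM /= fmorphV /= conj_normC mulrAC [_^* * a]mulrC -normCK expr2
  -mulrA divff ?mulr1.
Qed.

Lemma unitary_transitive n (x y : 'cV[C]_n) : hdot x x = hdot y y ->
  exists2 H, H \in unitarymx & exists2 c : C, c * c^* = 1 & H *m x = c *: y.
Proof.
move=> xx; have [c cc ca] := phase_normC (hdot y x).
exists (householder (x - c *: y)); first exact: householder_unitary.
exists c => //.
have cyx : hdot (c *: y) x = `|hdot y x| by rewrite hdotZl.
apply: householder_swap.
  by rewrite hdotZl hdotZr mulrA [c^* * c]mulrC cc mul1r.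
by rewrite -conj_hdot cyx conj_normC.
Qed.

Lemma unitary_scale_SU n (H : 'M[C]_n) : (0 < n)%N -> H \in unitarymx ->
  exists2 mu : C, mu * mu^* = 1 & mu *: H \in @SU R n.
Proof.
move=> n_gt0 /eqP HH.
have dd : \det H * (\det H)^* = 1 by rewrite -det_adjmx -det_mulmx HH det1.
have nd : `|\det H| = 1.
  by apply/eqP; rewrite -sqrp_eq1 ?normr_ge0 // normCK dd.
set mu := n.-root (\det H)^*.
have mm : mu * mu^* = 1.
  by rewrite -normCK /mu norm_rootC norm_conjC nd rootC1 // expr1n.
exists mu => //; apply/andP; split.
  by rewrite adjmxZ -scalemxAl -scalemxAr HH scalerA mm scale1r.
by rewrite detZ /mu rootCK // mulrC dd.
Qed.

End Hermitian.

Section Rays.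
Context {R : rcfType} {d : nat}.
Local Notation C := (R[i]).

Lemma hdot_uvec (psi : uvec R d) : hdot (val psi) (val psi) = 1.
Proof.
have := valP psi; rewrite /unitvec hdotE => /eqP/matrixP/(_ 0 0).
by rewrite !mxE /= mulr1n.
Qed.

Lemma unitvec_delta (i : 'I_d) : unitvec (delta_mx i 0 : 'cV[C]_d).
Proof.
rewrite /unitvec /adjmx map_delta_mx ?rmorph1 //= trmx_delta mul_delta_mx.
by apply/eqP/matrixP => j k; rewrite !ord1 !mxE.
Qed.

Lemma act_SU U (psi : uvec R d) : U \in @SU R d -> val (act U psi) = U *m val psi.
Proof.
case/andP => /eqP UU _.
have hu : unitvec (U *m val psi).
  rewrite /unitvec adjmxM mulmxA -(mulmxA (adjmx _)) (mulmx1C UU) mulmx1.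
  exact: valP psi.
by rewrite /act insubT.
Qed.

Lemma SU_transitive_rays (psi phi : uvec R d) : (0 < d)%N ->
  exists2 U, U \in @SU R d &
    exists c : C, c * c^* = 1 /\ val (act U psi) = c *: val phi.
Proof.
move=> d_gt0.
have [H unitH [c cc Hpsi]] :=
  unitary_transitive (etrans (hdot_uvec psi) (esym (hdot_uvec phi))).
have [mu mm SUmuH] := unitary_scale_SU d_gt0 unitH.
exists (mu *: H) => //; exists (mu * c); split.
  by rewrite rmorphM /= mulrACA mm cc mulr1.
by rewrite act_SU // -scalemxAl Hpsi scalerA.
Qed.

Lemma rspan_ray_fun (S : (uvec R d -> R) -> Prop) G :
  (forall F, S F -> OPF F) -> rspan S G -> ray_fun G.
Proof.
move=> S_OPF [n [a [f [Sf GE]]]] psi phi phase.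
rewrite !GE; apply: eq_bigr => i _; congr (_ * _).
by have [ray_f _] := S_OPF _ (Sf i); apply: ray_f.
Qed.

Lemma SU_invariant_ray_fun_const G : (0 < d)%N -> ray_fun G ->
  (forall U, U \in @SU R d -> forall psi, Gamma U G psi = G psi) ->
  forall psi phi, G psi = G phi.
Proof.
move=> d_gt0 rayG fixG psi phi.
have [U SU_U phase] := SU_transitive_rays psi phi d_gt0.
by rewrite -(fixG U SU_U psi); apply: rayG.
Qed.

End Rays.

Theorem mainTheorem4 (R : rcfType) (d : nat) (hd : (0 < d)%N)
  (Fd : (uvec R d -> R) -> Prop)
  (hOPF : forall F, Fd F -> OPF F)
  (hu : Fd (@unitOPF R d))
  (hC1 : C1 Fd)
  (hfin : finite_dim_span Fd) :
  (* the trivial representation occurs exactly once: the subspace of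
     Gamma-fixed vectors of V_d is the line spanned by the (nonzero) unit OPF *)
  (exists psi : uvec R d, @unitOPF R d psi <> 0) /\
  (forall G, fixed_vec Fd G <->
     exists c : R, forall psi, G psi = c * @unitOPF R d psi).
Proof.
pose e0 : uvec R d := exist (@unitvec R d) _ (unitvec_delta (Ordinal hd)).
split; first by exists e0; apply/eqP; exact: oner_neq0.
move=> G; split.
  case=> spanG fixG; exists (G e0) => psi; rewrite /unitOPF mulr1.
  exact: SU_invariant_ray_fun_const hd (rspan_ray_fun hOPF spanG) fixG psi e0.
case=> c Gc; split.
  exists 1%N, (fun _ => c), (fun _ => @unitOPF R d); split => // psi.
  by rewrite big_ord1 Gc.
by move=> U _ psi; rewrite /Gamma /compU !Gc.
Qed.
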